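(* Let $p_0,p_1,p_2,T>0$, let $\Lambda\subset[0,\infty)$ have finite measure, $q_k=p_k^{-1/2}$ ($k=0,1,2$), and $$p=p_0\chi_{(-\infty,-T/2]}+p_1\chi_{(-T/2,T/2]}+p_2\chi_{(T/2,\infty)}.$$ Set $$C=\tfrac1{16q_0^2}\Big[\big(1+\tfrac{q_0}{q_1}\big)^2\big(1+\tfrac{q_1}{q_2}\big)^2+\big(1-\tfrac{q_0}{q_1}\big)^2\big(1-\tfrac{q_1}{q_2}\big)^2\Big],\quad K=\tfrac1{8q_0^2}\big(1-\tfrac{q_0^2}{q_1^2}\big)\big(1-\tfrac{q_1^2}{q_2^2}\big),\quad \zeta=2q_1T.$$ Then for all $u>0$, $\kappa(u):=\frac{|a_0^+(u^2)|^2}{q_0^2}=C+K\cos(\zeta u)$, and hence $$J(s):=\frac1{2\pi}\int_{\Lambda^{1/2}}\frac{e^{isu}}{\kappa(u)}\,du=\frac1{2\pi}\int_{\Lambda^{1/2}}\frac{e^{isu}}{C+K\cos\zeta u}\,du,\quad s\in\mathbb{R}.$$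
   Context: $\Lambda^{1/2}=\{u\ge0:u^2\in\Lambda\}$. Here $n=2$, $t_1=-T/2$, $t_2=T/2$. For $z\in\mathbb{C}\setminus(-\infty,0]$ with principal square root $\sqrt z$ and $k=1,2$ let $$L_k(z)=\frac12\begin{bmatrix}\left(1+\frac{q_k}{q_{k-1}}\right)e^{it_k(q_{k-1}-q_k)\sqrt z} & \left(1-\frac{q_k}{q_{k-1}}\right)e^{-it_k(q_{k-1}+q_k)\sqrt z}\\ \left(1-\frac{q_k}{q_{k-1}}\right)e^{it_k(q_{k-1}+q_k)\sqrt z} & \left(1+\frac{q_k}{q_{k-1}}\right)e^{-it_k(q_{k-1}-q_k)\sqrt z}\end{bmatrix},$$ $R_k=L_k^{-1}$, and define $(a_2^+,b_2^+)=(1,0)$, $(a_l^+,b_l^+)^T=R_{l+1}(z)(a_{l+1}^+,b_{l+1}^+)^T$ for $l=1,0$. *)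

From HB Require Import structures.
From mathcomp Require Import all_boot all_order all_algebra.
From mathcomp Require Import all_classical all_reals all_analysis.
From mathcomp Require Import complex.
Set Implicit Arguments. Unset Strict Implicit. Unset Printing Implicit Defensive.
Import Order.TTheory GRing.Theory Num.Theory.
Local Open Scope ring_scope.
Local Open Scope complex_scope.

Section Defs.
Variable R : realType.

Definition cexp (w : R[i]) : R[i] :=
  Complex (expR (complex.Re w) * cos (complex.Im w))
          (expR (complex.Re w) * sin (complex.Im w)).

Definition iC : R[i] := Complex 0 1.

Definition qof (pk : R) : R := (Num.sqrt pk)^-1.

(* L_k(z) with qa = q_{k-1}, qb = q_k, t = t_k; sqrtc = principal square root *)
Definition Lmat (qa qb t : R) (z : R[i]) : 'M[R[i]]_2 :=
  let w := sqrtc z in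
  let cp : R[i] := ((1 + qb / qa) / 2)%:C in
  let cm : R[i] := ((1 - qb / qa) / 2)%:C in
  \matrix_(i < 2, j < 2)
    if (val i == 0%N) && (val j == 0%N) then cp * cexp (iC * (t * (qa - qb))%:C * w)
    else if val i == 0%N then cm * cexp (- iC * (t * (qa + qb))%:C * w)
    else if val j == 0%N then cm * cexp (iC * (t * (qa + qb))%:C * w)
    else cp * cexp (- iC * (t * (qa - qb))%:C * w).

Definition a2vec : 'cV[R[i]]_2 := \col_(i < 2) (if val i == 0%N then 1 else 0).

(* n = 2, t_1 = -T/2, t_2 = T/2; R_k = L_k^{-1};
   (a_1,b_1)^T = R_2 (a_2,b_2)^T, (a_0,b_0)^T = R_1 (a_1,b_1)^T *)
Definition abvec (p0 p1 p2 T : R) (l : nat) (z : R[i]) : 'cV[R[i]]_2 :=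
  let q0 := qof p0 in let q1 := qof p1 in let q2 := qof p2 in
  let R1 := invmx (Lmat q0 q1 (- (T / 2)) z) in
  let R2 := invmx (Lmat q1 q2 (T / 2) z) in
  match l with
  | 0%N => R1 *m (R2 *m a2vec)
  | 1%N => R2 *m a2vec
  | _ => a2vec
  end.

Definition a_plus (p0 p1 p2 T : R) (l : nat) (z : R[i]) : R[i] :=
  abvec p0 p1 p2 T l z ord0 ord0.

Definition cnorm2 (w : R[i]) : R := complex.Re w ^+ 2 + complex.Im w ^+ 2.

Definition kappa (p0 p1 p2 T u : R) : R :=
  cnorm2 (a_plus p0 p1 p2 T 0 ((u ^+ 2)%:C)) / (qof p0) ^+ 2.

Definition Cconst (p0 p1 p2 : R) : R :=
  let q0 := qof p0 in let q1 := qof p1 in let q2 := qof p2 in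
  (16 * q0 ^+ 2)^-1 *
  ((1 + q0 / q1) ^+ 2 * (1 + q1 / q2) ^+ 2 + (1 - q0 / q1) ^+ 2 * (1 - q1 / q2) ^+ 2).

Definition Kconst (p0 p1 p2 : R) : R :=
  let q0 := qof p0 in let q1 := qof p1 in let q2 := qof p2 in
  (8 * q0 ^+ 2)^-1 * (1 - q0 ^+ 2 / q1 ^+ 2) * (1 - q1 ^+ 2 / q2 ^+ 2).

Definition zeta (p1 T : R) : R := 2 * qof p1 * T.

Definition sqrt_set (Lam : set R) : set R := [set u | 0 <= u /\ Lam (u ^+ 2)].

End Defs.

From HB Require Import structures.
From mathcomp Require Import all_boot all_order all_algebra.
From mathcomp Require Import all_classical all_reals all_analysis.
From mathcomp Require Import complex.
From mathcomp Require Import ring.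
Import Order.TTheory GRing.Theory Num.Theory.
Local Open Scope ring_scope.

(* At z = u^2 with u >= 0 the principal square root is u, so each L_k is a
   matrix of real amplitudes times unit phasors cis θ, with det L_k = q_k/q_{k-1}.
   Hence the first entry of R_1 R_2 (1,0)^T is (q_0/q_2)(P cis α + Q cis β) with
   real P, Q, and |P cis α + Q cis β|^2 = P^2 + Q^2 + 2PQ cos(α - β), where
   α - β = -2 q_1 T u; expanding gives C + K cos(ζu).  The integrals agree
   because their integrands agree on Λ^{1/2} ⊆ [0, ∞). *)

Section Matrix2.
Context {F : fieldType}.

Definition mat2 (a b c d : F) : 'M[F]_2 := \matrix_(i < 2, j < 2)
  if (val i == 0%N) && (val j == 0%N) then a
  else if val i == 0%N then b else if val j == 0%N then c else d.

Definition col2 (x y : F) : 'cV[F]_2 := \col_(i < 2) if val i == 0%N then x else y.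

Lemma col2_ord0 x y : col2 x y ord0 ord0 = x.
Proof. by rewrite mxE. Qed.

Lemma mulmx_mat2_col2 a b c d x y :
  mat2 a b c d *m col2 x y = col2 (a * x + b * y) (c * x + d * y).
Proof.
apply/matrixP => i j; rewrite !mxE !big_ord_recr big_ord0 /= add0r !mxE.
by case: i => [[|[|i]] i_lt2].
Qed.

Lemma invmx_mat2 a b c d : a * d - b * c != 0 ->
  invmx (mat2 a b c d) = (a * d - b * c)^-1 *: mat2 d (- b) (- c) a.
Proof.
move=> det_neq0; set B := _ *: _.
have AB1 : mat2 a b c d *m B = 1%:M.
  apply/matrixP => i j; rewrite !mxE !big_ord_recr big_ord0 /= add0r !mxE.
  by case: i => [[|[|i]] i_lt2] //; case: j => [[|[|j]] j_lt2] //=; field.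
have [A_unit _] := mulmx1_unit AB1.
by rewrite -[invmx _]mulmx1 -AB1 mulmxA mulVmx ?mul1mx.
Qed.

Lemma scale_col2 k x y : k *: col2 x y = col2 (k * x) (k * y).
Proof. by apply/matrixP => i j; rewrite !mxE; case: ifP. Qed.

End Matrix2.

Section Phasor.
Context {R : realType}.
Local Open Scope complex_scope.

Definition cis (t : R) : R[i] := Complex (cos t) (sin t).

Lemma cisD a b : cis a * cis b = cis (a + b).
Proof. by rewrite /cis cosD sinD; simpc; congr Complex; ring. Qed.

Lemma cisNr a : cis a * cis (- a) = 1.
Proof. by rewrite cisD subrr /cis cos0 sin0. Qed.

Lemma cisNl a : cis (- a) * cis a = 1.
Proof. by rewrite mulrC cisNr. Qed.

Lemma det_phasor (cp cm a b : R) :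
  cp%:C * cis a * (cp%:C * cis (- a)) - cm%:C * cis (- b) * (cm%:C * cis b) =
  (cp ^+ 2 - cm ^+ 2)%:C.
Proof.
rewrite mulrACA [X in _ - X]mulrACA cisNr cisNl !mulr1.
by rewrite rmorphB !rmorphXn /= !expr2.
Qed.

Lemma cexp_iC x : cexp (iC R * x%:C) = cis x.
Proof. by rewrite /cexp /iC /cis /=; simpc; rewrite expR0 !mul1r. Qed.

Lemma cexp_iCM x v : cexp (iC R * x%:C * v%:C) = cis (x * v).
Proof. by rewrite -mulrA -rmorphM cexp_iC. Qed.

Lemma cexp_NiCM x v : cexp (- iC R * x%:C * v%:C) = cis (- (x * v)).
Proof. by rewrite !mulNr -mulrA -rmorphM -mulrN -rmorphN cexp_iC. Qed.

Lemma cnorm2_realM (k : R) (w : R[i]) : cnorm2 (k%:C * w) = k ^+ 2 * cnorm2 w.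
Proof. case: w => x y; rewrite /cnorm2; simpc => /=; ring. Qed.

Lemma cnorm2_cis_add (P Q a b : R) :
  cnorm2 (P%:C * cis a + Q%:C * cis b) = P ^+ 2 + Q ^+ 2 + 2 * P * Q * cos (a - b).
Proof.
rewrite /cnorm2 /cis cosB; simpc.
have -> : P ^+ 2 + Q ^+ 2 =
    P ^+ 2 * (cos a ^+ 2 + sin a ^+ 2) + Q ^+ 2 * (cos b ^+ 2 + sin b ^+ 2).
  by rewrite !cos2Dsin2 !mulr1.
by rewrite /=; ring.
Qed.
End Phasor.

Section Transfer.
Context {R : realType}.
Local Open Scope complex_scope.

Lemma Lmat_sqr (qa qb t u : R) : 0 <= u ->
  Lmat qa qb t (u ^+ 2)%:C =
  mat2 (((1 + qb / qa) / 2)%:C * cis (t * (qa - qb) * u))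
       (((1 - qb / qa) / 2)%:C * cis (- (t * (qa + qb) * u)))
       (((1 - qb / qa) / 2)%:C * cis (t * (qa + qb) * u))
       (((1 + qb / qa) / 2)%:C * cis (- (t * (qa - qb) * u))).
Proof.
move=> u_ge0; rewrite /Lmat sqrtc_sqrtr ?lecR ?sqr_ge0 //= sqrtr_sqr ger0_norm //.
by rewrite !cexp_iCM !cexp_NiCM.
Qed.

Lemma invmx_Lmat_sqr (qa qb t u : R) : qa != 0 -> qb != 0 -> 0 <= u ->
  invmx (Lmat qa qb t (u ^+ 2)%:C) =
  (qa / qb)%:C *:
  mat2 (((1 + qb / qa) / 2)%:C * cis (- (t * (qa - qb) * u)))
       (- (((1 - qb / qa) / 2)%:C * cis (- (t * (qa + qb) * u))))
       (- (((1 - qb / qa) / 2)%:C * cis (t * (qa + qb) * u)))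
       (((1 + qb / qa) / 2)%:C * cis (t * (qa - qb) * u)).
Proof.
move=> qa_neq0 qb_neq0 u_ge0.
have det_Lmat : ((1 + qb / qa) / 2) ^+ 2 - ((1 - qb / qa) / 2) ^+ 2 = qb / qa by field.
rewrite Lmat_sqr // invmx_mat2 det_phasor det_Lmat -?fmorphV ?invf_div //.
by rewrite (inj_eq (fmorph_inj _)) mulf_neq0 ?invr_eq0.
Qed.

Lemma transfer_a0_sqr (q0 q1 q2 T u : R) : q0 != 0 -> q1 != 0 -> q2 != 0 -> 0 <= u ->
  (invmx (Lmat q0 q1 (- (T / 2)) (u ^+ 2)%:C) *m
    (invmx (Lmat q1 q2 (T / 2) (u ^+ 2)%:C) *m col2 1 0)) ord0 ord0 =
  (q0 / q2)%:C *
  ((((1 + q1 / q0) / 2) * ((1 + q2 / q1) / 2))%:C *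
     cis (T / 2 * (q0 - q1) * u - T / 2 * (q1 - q2) * u) +
   (((1 - q1 / q0) / 2) * ((1 - q2 / q1) / 2))%:C *
     cis (T / 2 * (q0 + q1) * u + T / 2 * (q1 + q2) * u)).
Proof.
move=> q0_neq0 q1_neq0 q2_neq0 u_ge0.
rewrite !invmx_Lmat_sqr // -!scalemxAl -scalemxAr !mulmx_mat2_col2 !scale_col2 col2_ord0.
have -> : q0 / q2 = q0 / q1 * (q1 / q2) by rewrite mulrA divfK.
rewrite -!cisD !mulNr !opprK !rmorphM /=.
ring.
Qed.

Lemma qof_neq0 (p : R) : 0 < p -> qof p != 0.
Proof. by move=> p_gt0; rewrite /qof invr_eq0 sqrtr_eq0 -ltNge. Qed.

Lemma kappaE (p0 p1 p2 T u : R) : 0 < p0 -> 0 < p1 -> 0 < p2 -> 0 <= u ->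
  kappa p0 p1 p2 T u = Cconst p0 p1 p2 + Kconst p0 p1 p2 * cos (zeta p1 T * u).
Proof.
move=> /qof_neq0 q0_neq0 /qof_neq0 q1_neq0 /qof_neq0 q2_neq0 u_ge0.
rewrite /kappa /a_plus /abvec transfer_a0_sqr // cnorm2_realM cnorm2_cis_add /Cconst /Kconst /zeta /=.
rewrite [X in cos X](_ : _ = - (2 * qof p1 * T * u)) ?cosN; last by field.
by field; rewrite q0_neq0 q1_neq0 q2_neq0.
Qed.
End Transfer.

Local Open Scope classical_set_scope.

Theorem lemma4p1 (R : realType) (p0 p1 p2 T : R) (Lam : set R) :
  0 < p0 -> 0 < p1 -> 0 < p2 -> 0 < T ->
  measurable Lam -> Lam `<=` [set x | 0 <= x] ->
  (lebesgue_measure Lam < +oo)%E ->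
  (forall u : R, 0 < u ->
     kappa p0 p1 p2 T u = Cconst p0 p1 p2 + Kconst p0 p1 p2 * cos (zeta p1 T * u)) /\
  (forall s : R,
     (\int[lebesgue_measure]_(u in sqrt_set Lam)
        ((2 * pi)^-1 * cos (s * u) / kappa p0 p1 p2 T u)%:E
      = \int[lebesgue_measure]_(u in sqrt_set Lam)
        ((2 * pi)^-1 * cos (s * u)
          / (Cconst p0 p1 p2 + Kconst p0 p1 p2 * cos (zeta p1 T * u)))%:E)%E /\
     (\int[lebesgue_measure]_(u in sqrt_set Lam)
        ((2 * pi)^-1 * sin (s * u) / kappa p0 p1 p2 T u)%:E
      = \int[lebesgue_measure]_(u in sqrt_set Lam)
        ((2 * pi)^-1 * sin (s * u)
          / (Cconst p0 p1 p2 + Kconst p0 p1 p2 * cos (zeta p1 T * u)))%:E)%E).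
Proof.
move=> p0_gt0 p1_gt0 p2_gt0 _ _ _ _; split=> [u /ltW|s].
  exact: kappaE.
by split; apply: eq_integral => u; rewrite inE => -[u_ge0 _]; rewrite kappaE.
Qed.
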